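(* Let $(\mathcal{C},\Delta,\epsilon)$ be a finite-dimensional coalgebra over $\mathbb{C}$, let $V_1,V_2,\dots$ be finite-dimensional complex vector spaces and $\phi_i:\mathcal{C}\to V_i$ ($i=1,2,\dots$) linear maps. Let $W$ be a finite-dimensional complex vector space and $\psi:\mathcal{C}^*\to\mathrm{End}(W)$ an injective representation of the algebra $\mathcal{C}^*$. Let $B$ be a basis of $\mathcal{C}$ with dual basis $\{\delta_x\}_{x\in B}$ of $\mathcal{C}^*$, and define $A_i=\sum_{x\in B}\phi_i(x)\otimes\psi(\delta_x)\in V_i\otimes\mathrm{End}(W)$. Then for every $x\in\mathcal{C}$ there exists a matrix $b(x)\in\mathrm{End}(W)$ such that for all $n\geq 1$, $$(\phi_1\otimes\cdots\otimes\phi_n)\circ\Delta^{n-1}(x)=\sum_{y_1,\dots,y_n\in B}\mathrm{Tr}\big(b(x)\,\psi(\delta_{y_1})\psi(\delta_{y_2})\cdots\psi(\delta_{y_n})\big)\,\phi_1(y_1)\otimes\cdots\otimes\phi_n(y_n),$$ i.e. $(\phi_1\otimes\cdots\otimes\phi_n)\circ\Delta^{n-1}(x)$ is the matrix product state with tensors $A_1,\dots,A_n$ and boundary matrix $b(x)$.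
   Context: A coalgebra is a vector space $\mathcal{C}$ with a coassociative linear map $\Delta:\mathcal{C}\to\mathcal{C}\otimes\mathcal{C}$, $(\Delta\otimes\mathrm{Id})\Delta=(\mathrm{Id}\otimes\Delta)\Delta$, and a counit $\epsilon\in\mathcal{C}^*$ with $(\epsilon\otimes\mathrm{Id})\Delta=(\mathrm{Id}\otimes\epsilon)\Delta=\mathrm{Id}$. $\Delta^{n-1}$ denotes the $(n-1)$-fold iterated coproduct $\mathcal{C}\to\mathcal{C}^{\otimes n}$ ($\Delta^0=\mathrm{Id}$). The dual $\mathcal{C}^*$ is an algebra with product $(fg)(x)=(f\otimes g)(\Delta(x))$ and unit $\epsilon$. *)

(* Coordinates: the base field is the complex numbers
   R[i] = complex R for an arbitrary R : realType (a model of the reals). *)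
From HB Require Import structures.
From mathcomp Require Import all_boot all_order all_algebra.
From mathcomp Require Import complex.
From mathcomp Require Import reals.
Set Implicit Arguments. Unset Strict Implicit. Unset Printing Implicit Defensive.
Import Order.TTheory GRing.Theory Num.Theory.
Local Open Scope ring_scope.

Section Coalg.
Variables (K : fieldType) (d : nat).

(* A d-dimensional coalgebra C = K^d (elements are row vectors 'rV_d, the
   standard basis vectors are e_k = delta_mx 0 k).  The coproduct is given by
   its structure constants:  Delta e_k = \sum_(i,j) D k i j  e_i (x) e_j,
   and the counit by eps : 'cV_d with  eps(e_k) = eps k 0. *)

Definition coassociative (D : 'I_d -> 'I_d -> 'I_d -> K) : Prop :=
  forall k a b c,
    \sum_(i < d) D k i c * D i a b = \sum_(j < d) D k a j * D j b c.

Definition counital (D : 'I_d -> 'I_d -> 'I_d -> K) (eps : 'cV[K]_d) : Prop :=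
  (forall k j, \sum_(i < d) eps i 0 * D k i j = (k == j)%:R) /\
  (forall k i, \sum_(j < d) eps j 0 * D k i j = (k == i)%:R).

(* Linear functionals f in C^* are column vectors, f(x) = (x *m f) 0 0.
   Convolution product in C^*: (fg)(x) = (f (x) g)(Delta x). *)
Definition dual_mul (D : 'I_d -> 'I_d -> 'I_d -> K) (f g : 'cV[K]_d) : 'cV[K]_d :=
  \col_k (\sum_(i < d) \sum_(j < d) D k i j * f i 0 * g j 0).

(* Coefficient of e_(s_1) (x) ... (x) e_(s_n) in Delta^(n-1)(e_k),
   with Delta^0 = Id and Delta^(n-1) = (Id (x) Delta^(n-2)) Delta. *)
Fixpoint iter_coprod_coef (D : 'I_d -> 'I_d -> 'I_d -> K) (k : 'I_d)
  (s : seq 'I_d) : K :=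
  match s with
  | [::] => 0
  | i :: s' =>
      if s' is [::] then (k == i)%:R
      else \sum_(j < d) D k i j * iter_coprod_coef D j s'
  end.

End Coalg.

Definition mxprod (K : fieldType) (w : nat) (s : seq 'M[K]_w) : 'M[K]_w :=
  foldr (fun A B => A *m B) 1%:M s.

From HB Require Import structures.
From mathcomp Require Import all_boot all_order all_algebra.
From mathcomp Require Import complex.
From mathcomp Require Import reals.
Import Order.TTheory GRing.Theory Num.Theory.
Local Open Scope ring_scope.
Set Implicit Arguments. Unset Strict Implicit. Unset Printing Implicit Defensive.

(* The point x of C defines the linear functional g |-> g(x) on C^*.  As psi is
   injective, this functional factors through psi, and every linear functional
   on End(W) has the form M |-> Tr(b M); hence Tr(b psi(g)) = g(x) for all g.
   For g = delta_(y_1) ... delta_(y_n), multiplicativity of psi turns the left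
   side into the MPS coefficient, while g(x) is the coefficient of
   delta_(y_1) (x) ... (x) delta_(y_n) in Delta^(n-1)(x); summing against
   phi_1(y_1) (x) ... (x) phi_n(y_n) and using \sum_y delta_y(z) y = z gives the
   claim. *)

Section TupleSums.
Variable T : finType.

Lemma sum_tuple0 (R : nmodType) (G : 0.-tuple T -> R) :
  \sum_(s : 0.-tuple T) G s = G [tuple].
Proof. by rewrite (big_pred1 [tuple]) // => s; rewrite [s]tuple0 /= eq_refl. Qed.

Lemma sum_tupleS (R : nmodType) n (G : n.+1.-tuple T -> R) :
  \sum_(s : n.+1.-tuple T) G s = \sum_(j : T) \sum_(s : n.-tuple T) G [tuple of j :: s].
Proof.
rewrite pair_big (reindex (fun p : T * n.-tuple T => [tuple of p.1 :: p.2])) //=.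
exists (fun s => (thead s, [tuple of behead s])) => [[j s] _ | s _] /=.
  by congr pair; apply: val_inj.
by case/tupleP: s => j s; apply: val_inj.
Qed.

Lemma sum_tuple_prod (R : comPzSemiRingType) n (F : 'I_n -> T -> R) :
  \sum_(y : n.-tuple T) \prod_(t < n) F t (tnth y t) = \prod_(t < n) \sum_(j : T) F t j.
Proof.
rewrite bigA_distr_bigA (reindex (@finfun_of_tuple T n)) /=; last first.
  by exists tuple_of_finfun => f _; [apply: finfun_of_tupleK | apply: tuple_of_finfunK].
by apply: eq_bigr => y _; apply: eq_bigr => t _; rewrite ffunE.
Qed.

End TupleSums.

Section IteratedCoproduct.
Variables (K : fieldType) (d : nat) (D : 'I_d -> 'I_d -> 'I_d -> K).

Lemma iter_coprod_coef_cons n k i (s : n.+1.-tuple 'I_d) :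
  iter_coprod_coef D k (i :: s) = \sum_j D k i j * iter_coprod_coef D j s.
Proof. by case/tupleP: s. Qed.

Variable eps : 'cV[K]_d.
Hypothesis counitD : counital D eps.

Lemma dual_mulr1 f : dual_mul D f eps = f.
Proof.
apply/colP => k; rewrite mxE.
under eq_bigr => i _ do under eq_bigr => j _ do
  rewrite mulrAC mulrC [D k i j * _]mulrC.
under eq_bigr => i _ do rewrite -big_distrr /= counitD.2.
rewrite (bigD1 k) //= eqxx mulr1 big1 ?addr0 // => i ki.
by rewrite eq_sym (negbTE ki) mulr0.
Qed.

Lemma foldr_dual_mul_coef n (fs : n.+1.-tuple 'cV[K]_d) k :
  (foldr (dual_mul D) eps fs) k 0 =
  \sum_(s : n.+1.-tuple 'I_d) iter_coprod_coef D k s *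
     \prod_(t < n.+1) tnth fs t (tnth s t) 0.
Proof.
elim: n fs k => [|n IH] fs k; case/tupleP: fs => f fs.
  rewrite [fs]tuple0 /= dual_mulr1 sum_tupleS.
  under eq_bigr => i _ do rewrite sum_tuple0 big_ord1 /=.
  rewrite (bigD1 k) //= eqxx mul1r big1 ?addr0 // => i ki.
  by rewrite eq_sym (negbTE ki) mul0r.
rewrite /= mxE sum_tupleS; apply: eq_bigr => i _.
under eq_bigr => j _ do rewrite IH big_distrr /=.
rewrite exchange_big; apply: eq_bigr => s _.
rewrite iter_coprod_coef_cons big_distrl; apply: eq_bigr => j _ /=.
rewrite [in RHS]big_ord_recl.
under [in RHS]eq_bigr => t _ do rewrite !tnthS.
by rewrite !mulrA; congr (_ * _); exact: mulrAC.
Qed.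

End IteratedCoproduct.

Lemma mxtrace_trmx_mul (K : comPzRingType) m n (A B : 'M[K]_(m, n)) :
  \tr (A^T *m B) = (mxvec A *m (mxvec B)^T) 0 0.
Proof.
rewrite /mxtrace mxE (reindex _ (curry_mxvec_bij _ _)) /=.
under eq_bigr => j _ do rewrite mxE.
rewrite exchange_big pair_big; apply: eq_bigr => -[i j] _ /=.
by rewrite !mxE !mxvecE.
Qed.

Lemma linear_inj_factor (K : fieldType) d m (psi : 'cV[K]_d -> 'rV[K]_m) :
  linear psi -> injective psi ->
  forall x : 'rV[K]_d, exists c : 'cV[K]_m, forall f, psi f *m c = x *m f.
Proof.
move=> psi_lin psi_inj x.
pose psiL : {linear 'cV[K]_d -> 'rV[K]_m} :=
  HB.pack psi (GRing.isLinear.Build _ _ _ _ psi psi_lin).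
pose Psi : 'M[K]_(d, m) := \matrix_k psi (delta_mx k 0).
have psiE f : psi f = f^T *m Psi.
  change (psiL f = f^T *m Psi).
  rewrite mulmx_sum_row {1}(matrix_sum_delta f) linear_sum.
  by apply: eq_bigr => k _; rewrite big_ord1 linearZ rowK mxE.
have /row_freeP[Q PsiQ] : row_free Psi.
  apply: inj_row_free => v vPsi0; apply: trmx_inj; apply: psi_inj.
  by rewrite !psiE !trmxK vPsi0 mul0mx.
exists (Q *m x^T) => f.
rewrite psiE mulmxA -(mulmxA _ Psi) PsiQ mulmx1 -trmx_mul.
by apply/rowP => i; rewrite !ord1 mxE.
Qed.

Lemma mxtrace_representation (K : fieldType) d w (psi : 'cV[K]_d -> 'M[K]_w) :
  linear psi -> injective psi ->
  forall x : 'rV[K]_d, exists b : 'M[K]_w, forall f, \tr (b *m psi f) = (x *m f) 0 0.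
Proof.
move=> psi_lin psi_inj x.
have vec_psi_lin : linear (mxvec \o psi) by move=> a f g /=; rewrite psi_lin linearP.
have vec_psi_inj : injective (mxvec \o psi) := inj_comp (can_inj mxvecK) psi_inj.
have [c /= psi_c] := linear_inj_factor vec_psi_lin vec_psi_inj x.
exists (vec_mx c^T)^T => f.
by rewrite mxtrace_trmx_mul vec_mxK -trmx_mul mxE psi_c.
Qed.

Lemma sum_dual_basis (K : fieldType) d m (P : 'M[K]_d) (M : 'M[K]_(d, m)) i a :
  P \in unitmx -> \sum_j col j (invmx P) i 0 * (row j P *m M) 0 a = M i a.
Proof.
move=> P_unit; rewrite -[in RHS](mulKmx P_unit M) mxE.
by apply: eq_bigr => j _; rewrite -row_mul !mxE.
Qed.

Theorem theorem3p3
  (R : realType) (d : nat)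
  (* the coalgebra C = C^d : coproduct structure constants and counit *)
  (D : 'I_d -> 'I_d -> 'I_d -> R[i]) (eps : 'cV[R[i]]_d)
  (coassD : coassociative D) (counitD : counital D eps)
  (* V_1, V_2, ... (indexed from 0) of dimensions m i, and phi_i : C -> V_i
     as matrices acting on row vectors: phi_i(x) = x *m phi i *)
  (m : nat -> nat) (phi : forall i : nat, 'M[R[i]]_(d, m i))
  (* W = C^w and psi : C^* -> End(W) an injective algebra representation *)
  (w : nat) (psi : 'cV[R[i]]_d -> 'M[R[i]]_w)
  (psi_lin : forall (a : R[i]) (f g : 'cV[R[i]]_d), psi (a *: f + g) = a *: psi f + psi g)
  (psi_mul : forall f g : 'cV[R[i]]_d, psi (dual_mul D f g) = psi f *m psi g)
  (psi_unit : psi eps = 1%:M)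
  (psi_inj : injective psi)
  (* a basis B of C: the rows of an invertible matrix P (the basis vector
     y_j is row j P); its dual basis delta_j is col j (invmx P) *)
  (P : 'M[R[i]]_d) (P_unit : P \in unitmx) :
  forall x : 'rV[R[i]]_d,
  exists b : 'M[R[i]]_w,
  forall n : nat, (1 <= n)%N ->
  forall a : (forall t : 'I_n, 'I_(m t)),
    (* component a of (phi_1 (x) ... (x) phi_n)(Delta^(n-1) x) *)
    \sum_(k < d) x 0 k *
      \sum_(s : n.-tuple 'I_d)
        iter_coprod_coef D k s * \prod_(t < n) phi t (tnth s t) (a t)
  =
    (* component a of the MPS sum over y_1..y_n in B *)
    \sum_(y : n.-tuple 'I_d)
      \tr (b *m mxprod [seq psi (col j (invmx P)) | j <- y]) *
      \prod_(t < n) (row (tnth y t) P *m phi t) 0 (a t).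
Proof.
move=> x; have [b b_tr] := mxtrace_representation psi_lin psi_inj x.
exists b => -[//|n] _ a.
pose delta j := col j (invmx P).
have psi_foldr fs : psi (foldr (dual_mul D) eps fs) = mxprod (map psi fs).
  by elim: fs => [|f fs IH] /=; rewrite ?psi_unit ?psi_mul ?IH.
have mps_coef (y : n.+1.-tuple 'I_d) :
    \tr (b *m mxprod [seq psi (delta j) | j <- y]) =
    \sum_k x 0 k * \sum_(s : n.+1.-tuple 'I_d)
      iter_coprod_coef D k s * \prod_t delta (tnth y t) (tnth s t) 0.
  rewrite (map_comp psi delta) -psi_foldr b_tr mxE; apply: eq_bigr => k _.
  rewrite (foldr_dual_mul_coef counitD (map_tuple delta y)).
  congr (_ * _); apply: eq_bigr => s _.
  by congr (_ * _); apply: eq_bigr => t _; rewrite tnth_map.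
under [RHS]eq_bigr => y _ do rewrite mps_coef big_distrl /=.
rewrite [RHS]exchange_big; apply: eq_bigr => k _ /=.
under [RHS]eq_bigr => y _ do rewrite -mulrA big_distrl /=.
rewrite -big_distrr /=; congr (_ * _).
rewrite [RHS]exchange_big; apply: eq_bigr => s _ /=.
under [RHS]eq_bigr => y _ do rewrite -mulrA -big_split /=.
rewrite -big_distrr /=; congr (_ * _).
rewrite (sum_tuple_prod (fun t j => delta j (tnth s t) 0 * (row j P *m phi t) 0 (a t))).
by apply: eq_bigr => t _; rewrite sum_dual_basis.
Qed.
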